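(* Let $0\le r\le R$ be integers, assume $\mu<\infty$, $\mu p\neq 1$ and $\mu p q\neq 1$, and consider the model on the truncated tree $\mathbb{T}_R$ with the information starting at the vertex $x$ at distance $r$ from the root. Then $$ E_r (S) = \frac{1}{1 - \mu p} \bigg(1 + q \,\frac{1 - q^r}{1 - q} \, (1 - p) - (\mu p)^{R - r + 1} \,\frac{1 - pq (1 + (\mu - 1)(\mu pq)^r)}{1 - \mu pq} \bigg). $$
   Context: Let $(p_k)_{k\ge 0}$ be an offspring distribution with $p_0=0$, mean $\mu=\sum_k kp_k$ and variance $\sigma^2=\sum_k (k-\mu)^2p_k$. Let $\mathbb{T}$ be a Galton–Watson tree with root $0$ and offspring distribution $(p_k)$ (each vertex independently has $k$ offspring, i.e. edges going away from the root, with probability $p_k$). For an integer $R\ge 0$, the truncated tree $\mathbb{T}_R$ is the subgraph of $\mathbb{T}$ induced by the vertices at distance at most $R$ from the root. Fix $p,q\in(0,1)$. Each edge of the tree is replaced by two arrows: the arrow parent $\to$ offspring is open with probability $p$ and the arrow offspring $\to$ parent is open with probability $q$, all arrows independently of each other and of the tree. The source of the information is a vertex $x$ at distance $r$ from the root chosen independently of the offspring numbers of its ancestors and of the percolation (e.g. the vertex obtained from the root by always moving to the first offspring); let $0=x_0\to x_1\to\cdots\to x_r=x$ be the path from the root to $x$. The cluster is $\mathscr{C}=\{y: \text{there is a directed open path from } x \text{ to } y\}$ (including $x$), its elements are called wet, and $S=\operatorname{card}(\mathscr{C})$. $E_r$ and $P_r$ denote expectation and probability (over both the tree and the percolation) when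 the source is at distance $r$ from the root. *)

From HB Require Import structures.
From mathcomp Require Import all_boot all_order all_algebra.
From mathcomp Require Import all_classical all_reals all_analysis.
From Stdlib Require Import Relations.

Set Implicit Arguments.
Unset Strict Implicit.
Unset Printing Implicit Defensive.
Import Order.TTheory GRing.Theory Num.Theory.
Local Open Scope ring_scope.
Local Open Scope classical_set_scope.

(* A finite rooted plane tree whose edges carry the states of the two
   arrows: each child is given as ((down, up), subtree) where
   [down] = arrow parent -> offspring is open, [up] = arrow
   offspring -> parent is open. *)
Inductive ptree := PNode of seq (bool * bool * ptree).

Definition children (t : ptree) := let: PNode cs := t in cs.

Fixpoint enc (t : ptree) : GenTree.tree (bool * bool) :=
  let: PNode cs := t in
  GenTree.Node 0 (map (fun c => GenTree.Node 1 [:: GenTree.Leaf c.1; enc c.2]) cs).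

Fixpoint dec (g : GenTree.tree (bool * bool)) : ptree :=
  match g with
  | GenTree.Leaf _ => PNode [::]
  | GenTree.Node _ gs =>
      PNode (pmap (fun g' => match g' with
                  | GenTree.Node _ [:: GenTree.Leaf ab; g''] => Some (ab, dec g'')
                  | _ => None end) gs)
  end.

Lemma encK' : forall t, dec (enc t) = t.
Proof.
fix IH 1; case=> cs /=; congr PNode.
elim: cs => [|[ab c] cs IHcs] //=.
by rewrite IH IHcs.
Qed.

Lemma encK : cancel enc dec.
Proof. exact: encK'. Qed.

HB.instance Definition _ := Countable.copy ptree (can_type encK).

Section Model.
Variables (R : realType) (pk : nat -> R) (p q : R).

Definition ew (ab : bool * bool) : R :=
  (if ab.1 then p else 1 - p) * (if ab.2 then q else 1 - q).

(* [wt d t]: probability that the (percolated) Galton--Watson tree truncated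
   at depth d (i.e. T_d with all arrow states) equals t. *)
Fixpoint wt (d : nat) (t : ptree) {struct t} : R :=
  let: PNode cs := t in
  match d with
  | 0 => (size cs == 0%N)%:R
  | d'.+1 => pk (size cs) * foldr (fun c acc => ew c.1 * wt d' c.2 * acc) 1 cs
  end.

End Model.

(* Vertices are Ulam--Harris addresses: [::] is the root, rcons u i is the
   i-th offspring (0-indexed) of u. *)
Fixpoint sub (t : ptree) (u : seq nat) : option ptree :=
  match u with
  | [::] => Some t
  | i :: u' => if (i < size (children t))%N
               then sub (nth (PNode [::]) [seq c.2 | c <- children t] i) u'
               else None
  end.

Definition edge (t : ptree) (u : seq nat) (i : nat) : option (bool * bool) :=
  match sub t u with
  | Some (PNode cs) => if (i < size cs)%N then Some (nth (false, false) [seq c.1 | c <- cs] i)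
                       else None
  | None => None
  end.

Definition arrow (t : ptree) (x y : seq nat) : Prop :=
  exists u i ab, edge t u i = Some ab /\
    ((x = u /\ y = rcons u i /\ ab.1) \/ (x = rcons u i /\ y = u /\ ab.2)).

Definition cluster (t : ptree) (x : seq nat) : set (seq nat) :=
  [set y | clos_refl_trans _ (arrow t) x y].

Definition source (r : nat) : seq nat := nseq r 0%N.

Definition Ssize (R : realType) (t : ptree) (x : seq nat) : \bar R :=
  (\esum_(y in cluster t x) (1 : \bar R))%E.

Definition ES (R : realType) (pk : nat -> R) (p q : R) (Rt r : nat) : \bar R :=
  (\esum_(t in [set: ptree]) ((wt pk p q Rt t)%:E * Ssize R t (source r)))%E.

From Pilot Require Import Defs.
From HB Require Import structures.
From mathcomp Require Import all_boot all_order all_algebra.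
From mathcomp Require Import all_classical all_reals all_analysis.
From mathcomp Require Import ring.
From Stdlib Require Import Relations.
Import Order.TTheory GRing.Theory Num.Theory.
Set Implicit Arguments.
Unset Strict Implicit.
Unset Printing Implicit Defensive.
Local Open Scope ring_scope.

(* When the first-child path from the root to the source
      exists, the cluster of the source at depth r has an explicit
      description [wet]: the vertices below the source reached through open
      down-arrows and, if the information climbs up to an ancestor on the
      spine, that ancestor together with the downward clusters of its other
      children.  Averaging the recursions of step 1 yields the mean
      downward cluster [mean_down], the probability q^r that the information
      climbs r levels, and a recursion [mean_wet] for E_r(S).
   3. Algebra.  The recursion [mean_wet] is solved in closed form, and the
      theorem follows since a tree of positive weight contains the spine. *)

Definition nochild : bool * bool * ptree := (false, false, PNode [::]).
Definition child (t : ptree) (i : nat) := nth nochild (children t) i.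

Lemma sub_cons cs i u : sub (PNode cs) (i :: u) =
  if (i < size cs)%N then sub (nth nochild cs i).2 u else None.
Proof. by rewrite /=; case: ifP => // lt_i; rewrite (nth_map nochild). Qed.

Lemma edge_root cs j : edge (PNode cs) [::] j =
  if (j < size cs)%N then Some (nth nochild cs j).1 else None.
Proof. by rewrite /edge /=; case: ifP => // lt_j; rewrite (nth_map nochild). Qed.

Lemma edge_cons cs i u j : edge (PNode cs) (i :: u) j =
  if (i < size cs)%N then edge (nth nochild cs i).2 u j else None.
Proof. by rewrite /edge sub_cons; case: ifP. Qed.

Lemma arrowP cs x y : arrow (PNode cs) x y <->
  [\/ x = [::] /\ exists2 j, y = [:: j] & (j < size cs)%N && (nth nochild cs j).1.1,
      y = [::] /\ exists2 j, x = [:: j] & (j < size cs)%N && (nth nochild cs j).1.2 |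
      exists i x' y', [/\ x = i :: x', y = i :: y', (i < size cs)%N &
                          arrow (nth nochild cs i).2 x' y']].
Proof.
split.
  move=> [[|k u] [i [ab [Hedge Hdir]]]].
    rewrite edge_root in Hedge; case: ifP Hedge => // lt_i [eab]; subst ab.
    case: Hdir => [[-> [-> open]]|[-> [-> open]]].
      by apply: Or31; split => //; exists i; rewrite ?lt_i.
    by apply: Or32; split => //; exists i; rewrite ?lt_i.
  rewrite edge_cons in Hedge; case: ifP Hedge => // lt_k Hedge; apply: Or33.
  case: Hdir => [[-> [-> open]]|[-> [-> open]]].
    by exists k, u, (rcons u i); split => //; exists u, i, ab; split => //; left.
  by exists k, (rcons u i), u; split => //; exists u, i, ab; split => //; right.
case.
- move=> [-> [j -> /andP[lt_j open]]].
  by exists [::], j, (nth nochild cs j).1; rewrite edge_root lt_j; split => //; left.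
- move=> [-> [j -> /andP[lt_j open]]].
  by exists [::], j, (nth nochild cs j).1; rewrite edge_root lt_j; split => //; right.
- move=> [i [x' [y' [-> -> lt_i [u [j [ab [Hedge Hdir]]]]]]]].
  exists (i :: u), j, ab; rewrite edge_cons lt_i; split => //.
  by case: Hdir => [[-> [-> open]]|[-> [-> open]]]; [left|right].
Qed.

Definition reach (t : ptree) := clos_refl_trans (seq nat) (arrow t).

Lemma reach_lift cs i x y : (i < size cs)%N -> reach (nth nochild cs i).2 x y ->
  reach (PNode cs) (i :: x) (i :: y).
Proof.
move=> lt_i; elim=> [a b ab|a|a b c _ IHab _ IHbc].
- by apply: rt_step; apply/arrowP; apply: Or33; exists i, a, b.
- exact: rt_refl.
- exact: rt_trans IHab IHbc.
Qed.

(* [down_open t u]: every arrow on the path from the root down to u is open,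
   i.e. u is wet when the information starts at the root and only travels
   away from it. *)
Fixpoint down_open (t : ptree) (u : seq nat) : Prop :=
  if u is i :: u' then
    [/\ (i < size (children t))%N, (child t i).1.1 & down_open (child t i).2 u']
  else True.

(* [up_open t r]: the r up-arrows along the first-child spine are open,
   i.e. the information climbs from depth r back to the root. *)
Fixpoint up_open (t : ptree) (r : nat) : bool :=
  if r is r'.+1 then (child t 0).1.2 && up_open (child t 0).2 r' else true.

Fixpoint has_spine (t : ptree) (r : nat) : bool :=
  if r is r'.+1 then (0 < size (children t))%N && has_spine (child t 0).2 r'
  else true.

(* [wet t r u]: explicit description of the cluster of the source at depth r:
   either u lies below the source through open down-arrows, or the information
   climbs to some ancestor of the source and then descends into a branch
   that leaves the spine. *)
Fixpoint wet (t : ptree) (r : nat) (u : seq nat) : Prop :=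
  if r is r'.+1 then
    match u with
    | [::] => up_open t r
    | i :: u' => if i == 0%N then wet (child t 0).2 r' u'
                 else up_open t r /\ down_open t u
    end
  else down_open t u.

Lemma down_open_reach t u : down_open t u -> reach t [::] u.
Proof.
elim: u t => [|i u IH] [cs] /=; first by move=> _; apply: rt_refl.
move=> [lt_i open down]; apply: (@rt_trans _ _ _ [:: i]).
  by apply: rt_step; apply/arrowP; apply: Or31; split => //; exists i; rewrite ?lt_i.
exact/reach_lift/IH.
Qed.

Lemma down_open_step t x y : down_open t x -> arrow t x y -> down_open t y.
Proof.
elim: x t y => [|i x IH] [cs] y down /arrowP [].
- by move=> [_ [j -> /andP[]]].
- by move=> [-> _].
- by move=> [k [x' [y' []]]].
- by move=> [].
- by move=> [-> _].
- move=> [k [x' [y' [[<- <-] -> _ ar]]]].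
  by case: down => /= lt_i open down; split => //; apply: IH ar.
Qed.

Lemma wet_nil t r : wet t r [::] <-> up_open t r.
Proof. by case: r. Qed.

Lemma wet_source t r : wet t r (source r).
Proof. by elim: r t => [|r IH] t. Qed.

Lemma wet_step t r x y : wet t r x -> arrow t x y -> wet t r y.
Proof.
elim: r t x y => [|r IH] [cs] x y; first exact: down_open_step.
move=> wx /arrowP [].
- move=> [? [j -> /andP[lt_j open]]]; subst x => /=.
  by case: eqP => _; [apply/wet_nil; case/andP: wx | split].
- move=> [-> [j ? /andP[lt_j open]]]; subst x; move: wx => /=.
  by case: eqP => [ej /wet_nil up|_ []//]; subst j; apply/andP.
- move=> [k [x' [y' [? -> lt_k ar]]]]; subst x; move: wx => /=.
  case: eqP => [ek wx'|_ [climbs [lt_k' open down]]]; first by subst k; apply: IH wx' ar.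
  by split => //; split => //; apply: down_open_step down ar.
Qed.

(* Conversely every vertex of [wet t r] is reached from the source: climb
   the spine, then descend. *)
Lemma up_open_reach t r : has_spine t r -> up_open t r -> reach t (source r) [::].
Proof.
elim: r t => [|r IH] [cs] /=; first by move=> _ _; apply: rt_refl.
move=> /andP[nonleaf spine] /andP[open up]; apply: (@rt_trans _ _ _ [:: 0%N]).
  exact/reach_lift/IH.
by apply: rt_step; apply/arrowP; apply: Or32; split => //; exists 0%N; rewrite ?nonleaf.
Qed.

Lemma wet_reach t r u : has_spine t r -> wet t r u -> reach t (source r) u.
Proof.
elim: r t u => [|r IH] [cs] u spine; first exact: down_open_reach.
case: u => [|i u]; first exact: up_open_reach.
move: spine => /= /andP[nonleaf spine].
case: eqP => [->|_] wu; first exact/reach_lift/IH.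
case: wu => up down; apply: (@rt_trans _ _ _ [::]); last exact: down_open_reach.
by apply: (up_open_reach (t := PNode cs) (r := r.+1)) => //=; rewrite nonleaf.
Qed.

Lemma cluster_wet t r : has_spine t r -> Defs.cluster t (source r) = wet t r.
Proof.
move=> spine; apply/seteqP; split => y /=; last exact: wet_reach.
move=> path; have : wet t r (source r) by apply: wet_source.
by elim: path => [a b ab|//|a b c _ IHab _ IHbc]; [move/wet_step; apply | move/IHab/IHbc].
Qed.

Section ClusterSize.
Variable R : realType.
Local Open Scope ereal_scope.
Local Open Scope classical_set_scope.

Lemma esum_split_head (P : set (seq nat)) (a : seq nat -> \bar R) n :
  (forall y, 0 <= a y) -> (forall i u, P (i :: u) -> (i < n)%N) ->
  \esum_(y in P) a y = \esum_(y in P `&` [set [::]]) a y +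
     \sum_(0 <= i < n) \esum_(u in [set u | P (i :: u)]) a (i :: u).
Proof.
move=> a0 Pn.
have split_heads m :
    \esum_(y in P `&` [set y | exists2 i, (i < m)%N & exists u, y = i :: u]) a y =
    \sum_(0 <= i < m) \esum_(u in [set u | P (i :: u)]) a (i :: u).
  elim: m => [|m IH]; first by rewrite big_geq // esum1 // => y [_ []].
  rewrite big_nat_recr //= -IH [LHS](esumID [set y | exists u, y = m :: u]) //.
  rewrite addeC; congr (_ + _).
    congr esum; apply/seteqP; split => y /=.
      move=> [[Py [i lt_i [u ey]]] not_m]; subst y; split => //; exists i; last by exists u.
      by rewrite ltn_neqAle -ltnS lt_i andbT; apply: contra_notN not_m => /eqP ->; exists u.
    move=> [Py [i lt_i [u ey]]]; subst y; split.
      by split => //; exists i; [apply: ltnW | exists u].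
    by move=> [v [ei _]]; move: lt_i; rewrite ei ltnn.
  rewrite -(esum_image _ (cons m)); last by move=> u v _ _ [].
  congr esum; apply/seteqP; split => y /=.
    by move=> [[Py _] [u ey]]; subst y; exists u.
  by move=> [u Pu <-]; split; [split => //; exists m => //; exists u | exists u].
rewrite (esumID [set [::]]) //; congr (_ + _); rewrite -(split_heads n).
congr esum; apply/seteqP; split => -[|i u] /=.
- by move=> [_ []].
- by move=> [Pu _]; split => //; exists i; [apply: Pn Pu | exists u].
- by move=> [_ [j _ []]].
- by move=> [Pu _]; split.
Qed.

Definition down_size (t : ptree) : \bar R := \esum_(y in down_open t) 1.
Definition wet_size (t : ptree) (r : nat) : \bar R := \esum_(y in wet t r) 1.

Definition down_branch (c : bool * bool * ptree) : \bar R :=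
  if c.1.1 then down_size c.2 else 0.

Lemma down_size_ge0 t : 0 <= down_size t.
Proof. exact: esum_ge0. Qed.

Lemma wet_size_ge0 t r : 0 <= wet_size t r.
Proof. exact: esum_ge0. Qed.

Lemma down_branch_ge0 c : 0 <= down_branch c.
Proof. by rewrite /down_branch; case: ifP => // _; apply: down_size_ge0. Qed.

Lemma down_size_node cs : down_size (PNode cs) = 1 + \sum_(c <- cs) down_branch c.
Proof.
rewrite /down_size (@esum_split_head _ _ (size cs)) //; last by move=> i u [].
rewrite (_ : _ `&` _ = [set [::]]); last by apply/seteqP; split => y /= => [[]|->].
rewrite esum_set1 //; congr (_ + _).
rewrite (big_nth nochild); apply: eq_big_nat => i /andP[_ lt_i].
rewrite /down_branch; case: ifP => open.
  by congr esum; apply/seteqP; split => u /= => [[]|] //; split.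
by apply: esum1 => u /= [_]; rewrite /child /= open.
Qed.

Lemma wet_size_spine c cs r : wet_size (PNode (c :: cs)) r.+1 = wet_size c.2 r +
  (if c.1.2 && up_open c.2 r then 1 + \sum_(c' <- cs) down_branch c' else 0).
Proof.
rewrite /wet_size (@esum_split_head _ _ (size cs).+1) //; last first.
  by move=> [|i] u //= [_ []].
rewrite big_nat_recl //= addeCA; congr (_ + _).
set climbs := c.1.2 && up_open c.2 r.
have root_part : wet (PNode (c :: cs)) r.+1 `&` [set [::]] =
    if climbs then [set [::]] else set0.
  apply/seteqP; split => y /=.
    by move=> [up ey]; subst y; change (is_true climbs) in up; rewrite up.
  by case: ifP => // up ->.
have branch_part i : [set u | wet (PNode (c :: cs)) r.+1 (i.+1 :: u)] =
    if climbs && (nth nochild cs i).1.1 then down_open (nth nochild cs i).2 else set0.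
  apply/seteqP; split => u /=.
    by move=> [up [_ open down]]; rewrite (_ : climbs && _ = true) //; exact/andP.
  case: ifP => // /andP[up open] down; split => //; split => //.
  by rewrite ltnS ltnNge; apply: contraTN open => /(nth_default nochild) ->.
under eq_bigr do rewrite branch_part.
rewrite root_part (big_nth nochild) /down_branch.
case: climbs {root_part branch_part}.
  rewrite esum_set1 //; congr (_ + _); apply: eq_bigr => i _.
  by rewrite /=; case: ifP => _; rewrite ?esum_set0.
by rewrite esum_set0 add0e big1 // => i _; rewrite esum_set0.
Qed.

Lemma Ssize_wet_size t r : has_spine t r -> Ssize R t (source r) = wet_size t r.
Proof. by move=> spine; rewrite /Ssize cluster_wet. Qed.

End ClusterSize.

Arguments down_size {R}.
Arguments wet_size {R}.
Arguments down_branch {R}.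

Section EsumFacts.
Variable R : realType.
Local Open Scope ereal_scope.
Local Open Scope classical_set_scope.

Lemma esumZl (T : choiceType) (S : set T) (r : R) (a : T -> \bar R) :
  (0 <= r)%R -> (forall i, 0 <= a i) ->
  \esum_(i in S) (r%:E * a i) = r%:E * \esum_(i in S) a i.
Proof.
move=> r0 a0; rewrite /esum -ereal_supZl //; last first.
  by apply/set0P; exists 0; exists set0; [exact: fsets_set0 | rewrite fsbig_set0].
congr ereal_sup; apply/seteqP; split => x /=.
  by move=> [A SA <-]; exists (\sum_(i \in A) a i); [exists A | rewrite ge0_mule_fsumr].
by move=> [y [A SA <-] <-]; exists A => //; rewrite ge0_mule_fsumr.
Qed.

Lemma esum_mulr_const (T : choiceType) (S : set T) (f : T -> R) (Y : \bar R) :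
  (forall i, 0 <= f i)%R -> 0 <= Y ->
  \esum_(i in S) ((f i)%:E * Y) = (\esum_(i in S) (f i)%:E) * Y.
Proof.
move=> f0; case: Y => [y| |] //= y0.
  by rewrite muleC -esumZl //; apply: eq_esum => i _; rewrite muleC.
have [[i0 [Si0 fi0]]|all0] := pselect (exists i, S i /\ (0 < f i)%R).
  have single_term (g : T -> \bar R) : (forall i, 0 <= g i) -> g i0 <= \esum_(i in S) g i.
    move=> g0; apply: esum_ge; exists [set i0]; last by rewrite fsbig_set1.
    by split; [exact: finite_set1 | move=> x ->].
  have sum_gt0 : 0 < \esum_(i in S) (f i)%:E.
    apply: lt_le_trans (single_term (fun i => (f i)%:E) _); first by rewrite lte_fin.
    by move=> i; rewrite lee_fin.
  rewrite (gt0_muley sum_gt0); apply/eqP; rewrite eq_le leey /=.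
  apply: le_trans (single_term (fun i => (f i)%:E * +oo) _).
    by rewrite gt0_muley // lte_fin.
  by move=> i; rewrite mule_ge0 ?lee_fin.
have f_eq0 i : S i -> f i = 0%R.
  move=> Si; apply/eqP; rewrite eq_le f0 andbT leNgt; apply/negP => fi.
  by apply: all0; exists i.
rewrite (@esum1 _ _ S (fun i => (f i)%:E)); last by move=> i /f_eq0 ->.
by rewrite mul0e; apply: esum1 => i /f_eq0 ->; rewrite mul0e.
Qed.

Lemma esum_bool (g : bool -> \bar R) : (forall b, 0 <= g b) ->
  \esum_(b in [set: bool]) g b = g true + g false.
Proof.
move=> g0; rewrite (esumID [set true]) //.
rewrite (_ : _ `&` _ = [set true]); last by apply/seteqP; split => b /= => [[]|->].
rewrite (_ : _ `&` _ = [set false]); last by apply/seteqP; split => -[] //= [_ []].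
by rewrite !esum_set1.
Qed.

Lemma esum_bool_pair (g : bool * bool -> R) : (forall ab, 0 <= g ab)%R ->
  \esum_(ab in [set: bool * bool]) (g ab)%:E =
  (\sum_(a : bool) \sum_(b : bool) g (a, b))%:E.
Proof.
move=> g0; transitivity (\esum_(a in [set: bool]) \esum_(b in [set: bool]) (g (a, b))%:E).
  rewrite esum_esum; last by move=> *; rewrite lee_fin.
  by congr esum; [apply/seteqP; split => // x _; split | apply/funext => -[]].
rewrite (eq_esum (b := fun a => (g (a, true))%:E + (g (a, false))%:E)); last first.
  by move=> a _; rewrite esum_bool // => b; rewrite lee_fin.
rewrite esum_bool; last by move=> a; rewrite adde_ge0 ?lee_fin.
by rewrite !big_bool /= !EFinD.
Qed.

End EsumFacts.

Section Expectations.
Variables (R : realType) (pk : nat -> R) (mu p q : R).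
Local Open Scope ereal_scope.
Local Open Scope classical_set_scope.
Hypothesis pk_ge0 : forall k, (0 <= pk k)%R.
Hypothesis pk_sum : \esum_(k in [set: nat]) (pk k)%:E = 1.
Hypothesis pk0 : pk 0 = 0%R.
Hypothesis pk_mu : \esum_(k in [set: nat]) (k%:R * pk k)%:E = mu%:E.
Hypothesis p01 : (0 <= p <= 1)%R.
Hypothesis q01 : (0 <= q <= 1)%R.

Notation node_child := (bool * bool * ptree)%type.

Definition child_wt d (c : node_child) : R := (ew p q c.1 * wt pk p q d c.2)%R.
Definition brood_wt d (cs : seq node_child) : R :=
  foldr (fun c acc => child_wt d c * acc)%R 1%R cs.

Definition Etree d (F : ptree -> \bar R) :=
  \esum_(t in [set: ptree]) (wt pk p q d t)%:E * F t.
Definition Echild d (G : node_child -> \bar R) :=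
  \esum_(c in [set: node_child]) (child_wt d c)%:E * G c.
Definition Ebrood d k (H : seq node_child -> \bar R) :=
  \esum_(cs in [set cs | size cs = k]) (brood_wt d cs)%:E * H cs.

Definition edge_mean (f : bool * bool -> R) : R :=
  \sum_(a : bool) \sum_(b : bool) ew p q (a, b) * f (a, b).

Lemma ew_ge0 ab : (0 <= ew p q ab)%R.
Proof.
case/andP: p01 => p0 p1; case/andP: q01 => q0 q1.
by rewrite /ew; case: ab => [[] []] /=; apply: mulr_ge0; rewrite ?subr_ge0.
Qed.

Lemma wt_ge0 d t : (0 <= wt pk p q d t)%R.
Proof.
elim: d t => [|d IH] [cs] /=; first by case: eqP.
apply: mulr_ge0 => //; elim: cs => [|c cs IHcs] //=.
by apply: mulr_ge0 => //; apply: mulr_ge0; [apply: ew_ge0 | apply: IH].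
Qed.

Lemma child_wt_ge0 d c : (0 <= child_wt d c)%R.
Proof. by rewrite mulr_ge0 ?ew_ge0 ?wt_ge0. Qed.

Lemma brood_wt_ge0 d cs : (0 <= brood_wt d cs)%R.
Proof. by elim: cs => [|c cs IH] //=; rewrite mulr_ge0 ?child_wt_ge0. Qed.

Lemma Etree_ge0 d F : (forall t, 0 <= F t) -> 0 <= Etree d F.
Proof. by move=> F0; apply: esum_ge0 => t _; rewrite mule_ge0 ?lee_fin ?wt_ge0. Qed.

Lemma Echild_ge0 d G : (forall c, 0 <= G c) -> 0 <= Echild d G.
Proof. by move=> G0; apply: esum_ge0 => c _; rewrite mule_ge0 ?lee_fin ?child_wt_ge0. Qed.

Lemma eq_Echild d G1 G2 : (forall c, G1 c = G2 c) -> Echild d G1 = Echild d G2.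
Proof. by move=> eqG; congr Echild; apply/funext. Qed.

Lemma eq_Ebrood d k H1 H2 : (forall cs, H1 cs = H2 cs) -> Ebrood d k H1 = Ebrood d k H2.
Proof. by move=> eqH; congr Ebrood; apply/funext. Qed.

Lemma Etree_leaf F : (forall t, 0 <= F t) -> Etree 0 F = F (PNode [::]).
Proof.
move=> F0; rewrite /Etree.
rewrite (eq_esum (b := fun t => if t \in [set PNode [::]] then F t else 0)).
  by rewrite -esum_mkcond esum_set1.
move=> [[|c cs]] _ /=; first by rewrite mem_set // mul1e.
by rewrite mul0e memNset.
Qed.

Lemma Etree_succ d F : (forall t, 0 <= F t) ->
  Etree d.+1 F = \esum_(k in [set: nat]) (pk k)%:E * Ebrood d k (fun cs => F (PNode cs)).
Proof.
move=> F0; rewrite /Etree.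
rewrite (reindex_esum [set: seq node_child] [set: ptree] PNode); last first.
  by split => // [x y _ _ []|[cs] _]; last exists cs.
rewrite (reindex_esum ([set: nat] `*`` fun k => [set cs | size cs = k]) _ snd); last first.
  split => // [[k1 cs1] [k2 cs2] /set_mem [_ /= <-] /set_mem [_ /= <-] /= -> //|cs _].
  by exists (size cs, cs).
rewrite -(esum_esum (a := fun k cs => (wt pk p q d.+1 (PNode cs))%:E * F (PNode cs)));
  last first.
  by move=> k cs _ _; rewrite mule_ge0 ?lee_fin ?wt_ge0.
apply: eq_esum => k _; rewrite /Ebrood -esumZl //; last first.
  by move=> cs; rewrite mule_ge0 ?lee_fin ?brood_wt_ge0.
by apply: eq_esum => cs /= <-; rewrite muleA -EFinM.
Qed.

Lemma Ebrood_nil d H : 0 <= H [::] -> Ebrood d 0 H = H [::].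
Proof.
move=> H0; rewrite /Ebrood (_ : [set cs | _] = [set [::]]); last first.
  by apply/seteqP; split => cs /= => [/size0nil|->].
by rewrite esum_set1 //= mul1e.
Qed.

Lemma Ebrood_cons d k H : (forall cs, 0 <= H cs) ->
  Ebrood d k.+1 H = Echild d (fun c => Ebrood d k (fun cs => H (c :: cs))).
Proof.
move=> H0; rewrite /Echild /Ebrood.
transitivity (\esum_(c in [set: node_child]) \esum_(cs in [set cs | size cs = k])
    ((child_wt d c)%:E * ((brood_wt d cs)%:E * H (c :: cs)))); last first.
  apply: eq_esum => c _; rewrite esumZl ?child_wt_ge0 // => cs.
  by rewrite mule_ge0 ?lee_fin ?brood_wt_ge0.
rewrite esum_esum; last first.
  by move=> c cs _ _; rewrite !mule_ge0 ?lee_fin ?child_wt_ge0 ?brood_wt_ge0.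
rewrite (reindex_esum ([set: node_child] `*`` fun=> [set cs | size cs = k])
  [set cs | size cs = k.+1] (fun x => x.1 :: x.2)).
  by apply: eq_esum => -[c cs] _; rewrite muleA -EFinM.
split.
- by move=> [c cs] [_ /= <-].
- by move=> [c1 cs1] [c2 cs2] _ _ /= [-> ->].
- by move=> [|c cs] //= [size_cs]; exists (c, cs).
Qed.

Lemma Echild_split d (f : bool * bool -> R) (F : ptree -> \bar R) :
  (forall ab, 0 <= f ab)%R -> (forall t, 0 <= F t) ->
  Echild d (fun c => (f c.1)%:E * F c.2) = (edge_mean f)%:E * Etree d F.
Proof.
move=> f0 F0; rewrite /Echild.
rewrite (_ : [set: node_child] = [set: bool * bool] `*`` fun=> [set: ptree]); last first.
  by apply/seteqP; split.
rewrite -(esum_esum (a := fun ab t => (child_wt d (ab, t))%:E * ((f ab)%:E * F t)));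
  last first.
  by move=> ab t _ _; rewrite !mule_ge0 ?lee_fin ?child_wt_ge0.
have ewf_ge0 ab : (0 <= ew p q ab * f ab)%R by rewrite mulr_ge0 ?ew_ge0.
transitivity (\esum_(ab in [set: bool * bool]) ((ew p q ab * f ab)%R%:E * Etree d F)).
  apply: eq_esum => ab _; rewrite /Etree -esumZl //; last first.
    by move=> t; rewrite mule_ge0 ?lee_fin ?wt_ge0.
  by apply: eq_esum => t _; rewrite /child_wt /= !EFinM muleACA.
by rewrite esum_mulr_const ?Etree_ge0 // esum_bool_pair.
Qed.

Lemma edge_mean1 : edge_mean (fun _ => 1%R) = 1%R.
Proof. by rewrite /edge_mean !big_bool /ew /=; ring. Qed.

Lemma edge_mean_down : edge_mean (fun ab => (ab.1)%:R) = p.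
Proof. by rewrite /edge_mean !big_bool /ew /=; ring. Qed.

Lemma edge_mean_up : edge_mean (fun ab => (ab.2)%:R) = q.
Proof. by rewrite /edge_mean !big_bool /ew /=; ring. Qed.

(* A function of the subtree alone has the same average under a child as
   under a tree, since the edge states average to one. *)
Lemma Echild_subtree d (F : ptree -> \bar R) : (forall t, 0 <= F t) ->
  Echild d (fun c => F c.2) = Etree d F.
Proof.
move=> F0; rewrite -[RHS]mul1e -edge_mean1 -Echild_split //.
by apply: eq_Echild => c; rewrite mul1e.
Qed.

Lemma Etree_one d : Etree d (fun _ => 1) = 1.
Proof.
elim: d => [|d IH]; first by rewrite Etree_leaf.
have child_one : Echild d (fun _ => 1) = 1 by rewrite (@Echild_subtree d (fun _ => 1)).
have brood_one k : Ebrood d k (fun _ => 1) = 1.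
  by elim: k => [|k IHk]; rewrite ?Ebrood_nil // Ebrood_cons // IHk child_one.
by rewrite Etree_succ //; under eq_esum do rewrite brood_one mule1.
Qed.

Lemma Etree_const d Y : 0 <= Y -> Etree d (fun _ => Y) = Y.
Proof.
move=> Y0; have mass : \esum_(t in [set: ptree]) (wt pk p q d t)%:E = 1.
  by rewrite -(Etree_one d); apply: eq_esum => t _; rewrite mule1.
by rewrite /Etree esum_mulr_const // ?mass ?mul1e // => t; apply: wt_ge0.
Qed.

Lemma Echild_const d Y : 0 <= Y -> Echild d (fun _ => Y) = Y.
Proof. by move=> Y0; rewrite (@Echild_subtree d (fun _ => Y)) ?Etree_const. Qed.

Lemma Ebrood_const d k Y : 0 <= Y -> Ebrood d k (fun _ => Y) = Y.
Proof.
move=> Y0; elim: k => [|k IH]; first by rewrite Ebrood_nil.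
by rewrite Ebrood_cons // IH Echild_const.
Qed.

Lemma Ebrood_add d k (H1 H2 : seq node_child -> \bar R) :
  (forall cs, 0 <= H1 cs) -> (forall cs, 0 <= H2 cs) ->
  Ebrood d k (fun cs => H1 cs + H2 cs) = Ebrood d k H1 + Ebrood d k H2.
Proof.
move=> H10 H20; rewrite /Ebrood -esumD => [|cs _|cs _];
  rewrite ?mule_ge0 ?lee_fin ?brood_wt_ge0 //.
by apply: eq_esum => cs _; rewrite ge0_muleDr.
Qed.

Lemma Echild_add d (G1 G2 : node_child -> \bar R) :
  (forall c, 0 <= G1 c) -> (forall c, 0 <= G2 c) ->
  Echild d (fun c => G1 c + G2 c) = Echild d G1 + Echild d G2.
Proof.
move=> G10 G20; rewrite /Echild -esumD => [|c _|c _];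
  rewrite ?mule_ge0 ?lee_fin ?child_wt_ge0 //.
by apply: eq_esum => c _; rewrite ge0_muleDr.
Qed.

Lemma Ebrood_scale d k b (H : seq node_child -> \bar R) : (0 <= b)%R ->
  (forall cs, 0 <= H cs) -> Ebrood d k (fun cs => b%:E * H cs) = b%:E * Ebrood d k H.
Proof.
move=> b0 H0; rewrite /Ebrood -esumZl // => [|cs].
  by apply: eq_esum => cs _; rewrite muleCA.
by rewrite mule_ge0 ?lee_fin ?brood_wt_ge0.
Qed.

Lemma Echild_scale d b (G : node_child -> \bar R) : (0 <= b)%R ->
  (forall c, 0 <= G c) -> Echild d (fun c => b%:E * G c) = b%:E * Echild d G.
Proof.
move=> b0 G0; rewrite /Echild -esumZl // => [|c].
  by apply: eq_esum => c _; rewrite muleCA.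
by rewrite mule_ge0 ?lee_fin ?child_wt_ge0.
Qed.

Lemma Ebrood_sum d k (g : node_child -> \bar R) : (forall c, 0 <= g c) ->
  Ebrood d k (fun cs => \sum_(c <- cs) g c) = (k%:R)%:E * Echild d g.
Proof.
move=> g0; have sum_ge0 cs : 0 <= \sum_(c <- cs) g c by apply: sume_ge0.
elim: k => [|k IH]; first by rewrite Ebrood_nil ?big_nil ?mul0e.
rewrite Ebrood_cons //.
rewrite (@eq_Echild d _ (fun c => g c + (k%:R)%:E * Echild d g)); last first.
  move=> c; rewrite (@eq_Ebrood d k _ (fun cs => g c + \sum_(c' <- cs) g c')).
    by rewrite Ebrood_add ?Ebrood_const ?IH.
  by move=> cs; rewrite big_cons.
have kE0 : 0 <= (k%:R)%:E * Echild d g by rewrite mule_ge0 ?lee_fin ?Echild_ge0.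
rewrite Echild_add // Echild_const //.
by rewrite -{1}(mul1e (Echild d g)) -ge0_muleDl ?lee_fin // -EFinD -natr1 addrC.
Qed.

Lemma esum_offspring_affine (g : nat -> R) (m : R) (x y : \bar R) :
  (forall k, 0 <= g k)%R -> \esum_(k in [set: nat]) (g k * pk k)%:E = m%:E ->
  0 <= x -> 0 <= y ->
  \esum_(k in [set: nat]) (pk k)%:E * (x + (g k)%:E * y) = x + m%:E * y.
Proof.
move=> g0 g_mean x0 y0.
have gy0 k : 0 <= (g k)%:E * y by rewrite mule_ge0 ?lee_fin.
under eq_esum do rewrite ge0_muleDr //.
rewrite esumD => [|k _|k _]; rewrite ?mule_ge0 ?lee_fin //.
rewrite esum_mulr_const // pk_sum mul1e; congr (_ + _).
under eq_esum do rewrite muleA -EFinM mulrC.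
by rewrite esum_mulr_const ?g_mean // => k; rewrite mulr_ge0.
Qed.

Lemma esum_offspring_pred : \esum_(k in [set: nat]) ((k.-1)%:R * pk k)%:E = (mu - 1)%:E.
Proof.
have split_mean : \esum_(k in [set: nat]) ((k.-1)%:R * pk k)%:E +
    \esum_(k in [set: nat]) (pk k)%:E = mu%:E.
  rewrite -esumD => [|k _|k _]; rewrite ?lee_fin ?mulr_ge0 //.
  rewrite -pk_mu; apply: eq_esum => -[|k] _; first by rewrite pk0 !mulr0 add0e.
  by rewrite -EFinD /= -[X in (_ + X)%R]mul1r -mulrDl natr1.
move: split_mean; rewrite pk_sum.
by case: (\esum_(k in _) _) => [s [<-]| |] //=; rewrite addrK.
Qed.

(* Since pk 0 = 0, only roots with at least one child matter. *)
Lemma Etree_succ_nonleaf d F (A : nat -> \bar R) : (forall t, 0 <= F t) ->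
  (forall k, Ebrood d k.+1 (fun cs => F (PNode cs)) = A k.+1) ->
  Etree d.+1 F = \esum_(k in [set: nat]) (pk k)%:E * A k.
Proof.
move=> F0 eqA; rewrite Etree_succ //; apply: eq_esum => -[|k] _.
  by rewrite pk0 !mul0e.
by rewrite eqA.
Qed.

(* Mean size of the cluster of the root when only down-arrows are used:
   a Galton--Watson tree of mean offspring mu p truncated at depth d. *)
Fixpoint mean_down (d : nat) : R :=
  if d is d'.+1 then (1 + mu * p * mean_down d')%R else 1%R.

Lemma Echild_down_branch d : Echild d down_branch = p%:E * Etree d down_size.
Proof.
rewrite -edge_mean_down -Echild_split //; last exact: down_size_ge0.
by apply: eq_Echild => -[[[] b] t] /=; rewrite ?mul1e ?mul0e.
Qed.

Lemma Etree_down_size d : Etree d down_size = (mean_down d)%:E.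
Proof.
elim: d => [|d IH].
  by rewrite Etree_leaf ?down_size_node ?big_nil ?adde0 //; apply: down_size_ge0.
rewrite Etree_succ; last exact: down_size_ge0.
transitivity (\esum_(k in [set: nat]) (pk k)%:E * (1 + (k%:R)%:E * (p * mean_down d)%:E)).
  apply: eq_esum => k _; congr (_ * _).
  rewrite (@eq_Ebrood d k _ (fun cs => 1 + \sum_(c <- cs) down_branch c)); last first.
    by move=> cs; rewrite down_size_node.
  rewrite Ebrood_add // ?Ebrood_const ?Ebrood_sum ?Echild_down_branch ?IH ?EFinM //.
    exact: down_branch_ge0.
  by move=> cs; apply: sume_ge0 => c _; apply: down_branch_ge0.
have mean_ge0 : (0 <= mean_down d)%R.
  by rewrite -lee_fin -IH; apply: Etree_ge0 => t; apply: down_size_ge0.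
rewrite (esum_offspring_affine (m := mu)) ?lee_fin ?mulr_ge0 //.
- by rewrite -EFinM -EFinD mulrA.
- by case/andP: p01.
Qed.

Lemma mean_down_ge0 d : (0 <= mean_down d)%R.
Proof.
by rewrite -lee_fin -Etree_down_size; apply: Etree_ge0 => t; apply: down_size_ge0.
Qed.

Lemma indicator_ge0 (b : bool) : 0 <= (b%:R)%:E :> \bar R.
Proof. by rewrite lee_fin ler0n. Qed.

Lemma Echild_climb d r : Echild d (fun c => ((c.1.2 && up_open c.2 r)%:R)%:E) =
  q%:E * Etree d (fun t => ((up_open t r)%:R)%:E).
Proof.
rewrite -edge_mean_up -Echild_split => [||t]; [|by [] | exact: indicator_ge0].
by apply: eq_Echild => -[[a []] t] /=; rewrite ?mul1e ?mul0e.
Qed.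

Lemma Etree_up_open d r : (r <= d)%N ->
  Etree d (fun t => ((up_open t r)%:R)%:E) = (q ^+ r)%:E.
Proof.
elim: r d => [|r IH] d le_rd.
  by rewrite (_ : (fun t => ((up_open t 0)%:R)%:E) = fun=> 1) // Etree_const.
case: d le_rd => // d le_rd.
rewrite (@Etree_succ_nonleaf d _ (fun=> (q ^+ r.+1)%:E)) => [|t|k].
- by rewrite esum_mulr_const // ?pk_sum ?mul1e // lee_fin exprn_ge0 //; case/andP: q01.
- exact: indicator_ge0.
rewrite Ebrood_cons => [|cs]; last exact: indicator_ge0.
rewrite (@eq_Echild d _ (fun c => ((c.1.2 && up_open c.2 r)%:R)%:E)).
  by rewrite Echild_climb IH // -EFinM exprS.
by move=> c; rewrite (@Ebrood_const d k ((c.1.2 && up_open c.2 r)%:R)%:E) ?indicator_ge0.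
Qed.

Fixpoint mean_wet (d r : nat) : R :=
  if r is r'.+1 then
    (mean_wet d.-1 r' + q ^+ r'.+1 * (1 + (mu - 1) * p * mean_down d.-1))%R
  else mean_down d.

Lemma Ebrood_wet_size d r k c :
  Ebrood d k (fun cs => wet_size (PNode (c :: cs)) r.+1) =
  wet_size c.2 r + ((c.1.2 && up_open c.2 r)%:R)%:E * (1 + k%:R * (p * mean_down d))%:E.
Proof.
have branches_ge0 cs : 0 <= \sum_(c' <- cs) down_branch c'.
  by apply: sume_ge0 => c' _; apply: down_branch_ge0.
set b := c.1.2 && up_open c.2 r.
rewrite (@eq_Ebrood d k _
    (fun cs => wet_size c.2 r + (b%:R)%:E * (1 + \sum_(c' <- cs) down_branch c')));
  last first.
  by move=> cs; rewrite wet_size_spine /b; case: (_ && _); rewrite ?mul1e ?mul0e.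
rewrite Ebrood_add => [|cs|cs]; last by rewrite mule_ge0 ?indicator_ge0 ?adde_ge0.
  2: exact: wet_size_ge0.
rewrite (@Ebrood_const d k (wet_size c.2 r)) ?wet_size_ge0 // Ebrood_scale => [||cs] //.
  2: by rewrite adde_ge0.
rewrite Ebrood_add // Ebrood_const // Ebrood_sum; last exact: down_branch_ge0.
by rewrite Echild_down_branch Etree_down_size EFinD !EFinM.
Qed.

Lemma Echild_wet_size d r K : (r <= d)%N -> (0 <= K)%R ->
  Echild d (fun c => wet_size c.2 r + ((c.1.2 && up_open c.2 r)%:R)%:E * K%:E) =
  Etree d (fun t => wet_size t r) + (q ^+ r.+1 * K)%:E.
Proof.
move=> le_rd K0; rewrite Echild_add => [|c|c]; last by rewrite mule_ge0 ?indicator_ge0.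
  2: exact: wet_size_ge0.
rewrite (@Echild_subtree d (fun t => wet_size t r)) => [|t]; last exact: wet_size_ge0.
rewrite (@eq_Echild d _ (fun c => K%:E * ((c.1.2 && up_open c.2 r)%:R)%:E)); last first.
  by move=> c; rewrite muleC.
rewrite Echild_scale //.
by rewrite Echild_climb Etree_up_open // -!EFinM exprS mulrC.
Qed.

Lemma Etree_wet_size d r : (r <= d)%N ->
  Etree d (fun t => wet_size t r) = (mean_wet d r)%:E.
Proof.
elim: r d => [|r IH] d le_rd; first exact: Etree_down_size.
case: d le_rd => // d le_rd.
have m0 := mean_down_ge0 d.
have p0 : (0 <= p)%R by case/andP: p01.
have q0 : (0 <= q)%R by case/andP: q01.
have wet0 : (0 <= mean_wet d r)%R.
  by rewrite -lee_fin -IH //; apply: Etree_ge0 => t; apply: wet_size_ge0.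
rewrite (@Etree_succ_nonleaf d _ (fun k => (mean_wet d r + q ^+ r.+1)%:E +
    ((k.-1)%:R)%:E * (q ^+ r.+1 * (p * mean_down d))%:E)) => [|t|k].
- rewrite (esum_offspring_affine (m := mu - 1)) ?esum_offspring_pred //.
  + by rewrite -EFinM -EFinD /=; congr EFin; ring.
  + by rewrite lee_fin addr_ge0 ?exprn_ge0.
  + by rewrite lee_fin !mulr_ge0 ?exprn_ge0.
- exact: wet_size_ge0.
rewrite Ebrood_cons => [|cs]; last exact: wet_size_ge0.
rewrite (eq_Echild d (fun c => Ebrood_wet_size d r k c)).
rewrite Echild_wet_size ?addr_ge0 ?mulr_ge0 // IH //.
by rewrite -EFinM -!EFinD /=; congr EFin; ring.
Qed.

End Expectations.

(* A tree of positive weight has no leaf above depth d, hence contains the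
   spine leading to the source. *)
Lemma wt_has_spine (R : realType) (pk : nat -> R) p q d t r :
  pk 0 = 0 -> wt pk p q d t != 0 -> (r <= d)%N -> has_spine t r.
Proof.
move=> pk0; elim: r d t => [|r IH] [|d] [cs] //= wt_neq0 le_rd.
case: cs wt_neq0 => [|c cs] /=; first by rewrite pk0 mul0r eqxx.
move=> wt_neq0; apply: (IH d) => //; apply: contraNneq wt_neq0 => ->.
by rewrite mulr0 mul0r mulr0.
Qed.

Lemma ES_Etree (R : realType) (pk : nat -> R) p q Rt r : pk 0 = 0 -> (r <= Rt)%N ->
  ES pk p q Rt r = Etree pk p q Rt (fun t => wet_size t r).
Proof.
move=> pk0 le_rRt; apply: eq_esum => t _.
have [->|wt_neq0] := eqVneq (wt pk p q Rt t) 0; first by rewrite !mul0e.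
by rewrite Ssize_wet_size // (wt_has_spine pk0 wt_neq0 le_rRt).
Qed.

Section ClosedForm.
Variables (R : realType) (mu p q : R).
Hypothesis mup_neq1 : mu * p != 1.
Hypothesis mupq_neq1 : mu * p * q != 1.
Hypothesis q_neq1 : q != 1.

Lemma mean_down_closed d : mean_down mu p d = (1 - (mu * p) ^+ d.+1) / (1 - mu * p).
Proof.
have mup_neq0 : 1 - mu * p != 0 by rewrite subr_eq0 eq_sym.
elim: d => [|d IH] /=; first by rewrite expr1 divff.
by rewrite IH !exprS; field.
Qed.

Definition mean_wet_formula (Rt r : nat) : R :=
  (1 - mu * p)^-1 *
    (1 + q * ((1 - q ^+ r) / (1 - q)) * (1 - p)
       - (mu * p) ^+ (Rt - r).+1
         * ((1 - p * q * (1 + (mu - 1) * (mu * p * q) ^+ r)) / (1 - mu * p * q))).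

Lemma mean_wet_closed d r : (r <= d)%N -> mean_wet mu p q d r = mean_wet_formula d r.
Proof.
have mup_neq0 : 1 - mu * p != 0 by rewrite subr_eq0 eq_sym.
have mupq_neq0 : 1 - mu * p * q != 0 by rewrite subr_eq0 eq_sym.
have q_neq0 : 1 - q != 0 by rewrite subr_eq0 eq_sym.
elim: r d => [|r IH] d le_rd.
  rewrite /= mean_down_closed /mean_wet_formula subn0 !expr0.
  rewrite (_ : 1 - p * q * (1 + (mu - 1) * 1) = 1 - mu * p * q); last by ring.
  by field; rewrite ?mup_neq0 ?mupq_neq0 ?q_neq0.
case: d le_rd => // d le_rd.
rewrite /= IH // mean_down_closed /mean_wet_formula subSS.
have [n ->] : exists n, d = (n + r)%N by exists (d - r)%N; rewrite subnK.
rewrite addnK.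
set A := (mu * p) ^+ n.+1.
have split_exp : (mu * p) ^+ (n + r).+1 = A * (mu * p) ^+ r by rewrite -exprD addSn.
rewrite split_exp (exprS q) (exprS (mu * p * q)) exprMn.
by field; rewrite ?mup_neq0 ?mupq_neq0 ?q_neq0.
Qed.

End ClosedForm.

Theorem theorem1 (R : realType) (pk : nat -> R) (mu p q : R) (r Rt : nat) :
  (forall k, 0 <= pk k) ->
  (\esum_(k in [set: nat]) (pk k)%:E = 1%E) ->
  pk 0%N = 0 ->
  (\esum_(k in [set: nat]) (k%:R * pk k)%:E = mu%:E) ->
  0 < p < 1 -> 0 < q < 1 ->
  (r <= Rt)%N ->
  mu * p != 1 -> mu * p * q != 1 ->
  ES pk p q Rt r =
  ((1 - mu * p)^-1 *
    (1 + q * ((1 - q ^+ r) / (1 - q)) * (1 - p)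
       - (mu * p) ^+ (Rt - r).+1
         * ((1 - p * q * (1 + (mu - 1) * (mu * p * q) ^+ r)) / (1 - mu * p * q))))%:E.
Proof.
move=> pk_ge0 pk_sum pk0 pk_mu /andP[p_gt0 p_lt1] /andP[q_gt0 q_lt1] le_rRt.
move=> mup_neq1 mupq_neq1.
have p01 : 0 <= p <= 1 by rewrite !ltW.
have q01 : 0 <= q <= 1 by rewrite !ltW.
rewrite ES_Etree // (Etree_wet_size pk_ge0 pk_sum pk0 pk_mu p01 q01 le_rRt).
by rewrite mean_wet_closed // lt_eqF.
Qed.
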